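(* Let $k\ge2$, $r\in\{k-1,k,k+1\}$ and let $K$ be a triangle or an axis-parallel rectangle. Then the sum defining $V^{r-1,k}_h(K)$ is direct, and the sequence $$0\longrightarrow\mathbb R\xrightarrow{\ \subset\ }\Sigma^r_h(K)\xrightarrow{\ \nabla\ }V^{r-1,k}_h(K)\xrightarrow{\ \nabla\times\ }W^{k-1}_h(K)\longrightarrow 0$$ is a complex and is exact.
   Context: Notation: for $\bm u=(u_1,u_2)^T$, $\nabla\times\bm u=\partial_{x_1}u_2-\partial_{x_2}u_1$; for a scalar $v$, $\bm\nabla\times v=(\partial_{x_2}v,-\partial_{x_1}v)^T$. $P_i(K)$ is the space of polynomials of total degree at most $i$ on $K$, $\bm P_i(K)=[P_i(K)]^2$, $\widetilde P_i$ the homogeneous polynomials of degree $i$, $Q_{i,j}(K)$ the polynomials of degree at most $i$ in $x_1$ and at most $j$ in $x_2$, $Q_i=Q_{i,i}$; spaces with negative index are $\{0\}$. $\bm x=(x_1,x_2)^T$, $\bm x^\perp=(-x_2,x_1)^T$. The Poincaré operator is $(\mathfrak p u)(\bm x)=\int_0^1 t\,\bm x^\perp u(t\bm x)\,dt$ (origin at $0\in\mathbb R^2$). An element $K$ is either a triangle with barycentric coordinates $\lambda_1,\lambda_2,\lambda_3$, or an axis-parallel rectangle $K=(x_l,x_r)\times(y_d,y_u)$ with $h_x=x_r-x_l$, $h_y=y_u-y_d$; $\bm\tau_e$ denotes a unit tangent to an edge $e$. Bubbles: $B_t=\lambda_1\lambda_2\lambda_3$, $B_r=h_x^{-2}h_y^{-2}(x_1-x_l)(x_1-x_r)(x_2-y_d)(x_2-y_u)$.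 Local spaces, for an integer $k\ge2$ and $r\in\{k-1,k,k+1\}$: $\Sigma^r_h(K)=P_r(K)$ (triangle) or $Q_r(K)$ (rectangle). For a triangle, $W^{k-1}_h(K)=P_{k-1}(K)$ if $k\ge4$ and $P_{k-1}(K)\oplus\mathrm{span}\{B_t\}$ if $k=2,3$; for a rectangle, $W^{k-1}_h(K)=Q_{k-1}(K)$ if $k\ge3$ and $Q_1(K)\oplus\mathrm{span}\{B_r\}$ if $k=2$. Modified Poincaré operator: $\widetilde{\mathfrak p}w=\mathfrak pw-\nabla\Phi w$, where $\Phi$ is a fixed linear map from $W^{k-1}_h(K)$ into polynomials such that for every $w$ the function $(\mathfrak p w-\nabla\Phi w)\cdot\bm\tau_e$ is constant on each edge $e$ of $K$, and such that $\Phi(W^{k-1}_h(K)\cap P_j(K))\subset P_{j+1}(K)$ for triangles, resp. $\Phi(W^{k-1}_h(K)\cap Q_j(K))\subset Q_{j+1}(K)$ for rectangles, for every $j\ge0$. Then $V^{r-1,k}_h(K)=\nabla\Sigma^r_h(K)+\mathfrak pW^{k-1}_h(K)$ when $r=k+1$, or when $r=k$ and $k\ge4$; and $V^{r-1,k}_h(K)=\nabla\Sigma^r_h(K)+\widetilde{\mathfrak p}W^{k-1}_h(K)$ when $r=k-1$, or when $r=k$ and $k\in\{2,3\}$. *)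

From HB Require Import structures.
From mathcomp Require Import all_boot all_order all_algebra.
From mathcomp Require Import mpoly.
Set Implicit Arguments. Unset Strict Implicit. Unset Printing Implicit Defensive.
Import Order.TTheory GRing.Theory Num.Theory.
Local Open Scope ring_scope.

Section Defs.
Variable R : rcfType.

Definition poly2 := {mpoly R[2]}.
Definition vec := (poly2 * poly2)%type.

Definition i0 : 'I_2 := ord0.
Definition i1 : 'I_2 := ord_max.
Definition x1 : poly2 := 'X_i0.
Definition x2 : poly2 := 'X_i1.

Definition vadd (u v : vec) : vec := (u.1 + v.1, u.2 + v.2).
Definition vsub (u v : vec) : vec := (u.1 - v.1, u.2 - v.2).
Definition vzero : vec := (0, 0).

Definition grad (s : poly2) : vec := (mderiv i0 s, mderiv i1 s).
Definition curl (u : vec) : poly2 := mderiv i0 u.2 - mderiv i1 u.1.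

Definition inP (i : nat) (p : poly2) : Prop :=
  forall m, m \in msupp p -> (mdeg m <= i)%N.
Definition inQ2 (i j : nat) (p : poly2) : Prop :=
  forall m, m \in msupp p -> (m i0 <= i)%N /\ (m i1 <= j)%N.
Definition inQ (i : nat) (p : poly2) : Prop := inQ2 i i p.

(* Poincare operator  (p u)(x) = \int_0^1 t x^perp u(t x) dt, computed
   monomialwise: \int_0^1 t * t^{|m|} dt = 1/(|m|+2). *)
Definition poincare_int (u : poly2) : poly2 :=
  \sum_(m <- msupp u) (u@_m / (mdeg m + 2)%:R) *: 'X_[m].
Definition poincare (u : poly2) : vec :=
  (- x2 * poincare_int u, x1 * poincare_int u).

Definition mpoincare (Phi : poly2 -> poly2) (w : poly2) : vec :=
  vsub (poincare w) (grad (Phi w)).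

Definition pt := (R * R)%type.
Definition evalp (p : poly2) (a : pt) : R :=
  p.@[fun i : 'I_2 => if i == i0 then a.1 else a.2].

(* Elements: a triangle (three vertices) or an axis-parallel rectangle
   (x_l, x_r) x (y_d, y_u). *)
Inductive elem :=
  | Tri of pt & pt & pt
  | Rect of R & R & R & R.

Definition det2 (u v : pt) : R := u.1 * v.2 - u.2 * v.1.
Definition psub (a b : pt) : pt := (a.1 - b.1, a.2 - b.2).

Definition valid_elem (K : elem) : Prop :=
  match K with
  | Tri a b c => det2 (psub b a) (psub c a) != 0
  | Rect xl xr yd yu => xl < xr /\ yd < yu
  end.

(* barycentric coordinate of vertex ai in triangle (ai, aj, ak):
   lambda(x) = det(aj - x, ak - x) / det(aj - ai, ak - ai) *)
Definition bary (ai aj ak : pt) : poly2 :=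
  (det2 (psub aj ai) (psub ak ai))^-1 *:
   ((aj.1%:MP - x1) * (ak.2%:MP - x2) - (aj.2%:MP - x2) * (ak.1%:MP - x1)).

Definition bubble_tri (a b c : pt) : poly2 :=
  bary a b c * bary b c a * bary c a b.

Definition bubble_rect (xl xr yd yu : R) : poly2 :=
  ((xr - xl) ^- 2 * (yu - yd) ^- 2) *:
  ((x1 - xl%:MP) * (x1 - xr%:MP) * (x2 - yd%:MP) * (x2 - yu%:MP)).

Definition edges (K : elem) : seq (pt * pt) :=
  match K with
  | Tri a b c => [:: (a, b); (b, c); (c, a)]
  | Rect xl xr yd yu =>
      [:: ((xl, yd), (xr, yd)); ((xr, yd), (xr, yu));
          ((xr, yu), (xl, yu)); ((xl, yu), (xl, yd))]
  end.

Definition tangent (e : pt * pt) : pt :=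
  let d := psub e.2 e.1 in
  let n := Num.sqrt (d.1 ^+ 2 + d.2 ^+ 2) in (d.1 / n, d.2 / n).

Definition tang_comp (v : vec) (e : pt * pt) : poly2 :=
  (tangent e).1 *: v.1 + (tangent e).2 *: v.2.

Definition const_on_edge (f : poly2) (e : pt * pt) : Prop :=
  forall s : R, 0 <= s <= 1 ->
    evalp f (e.1.1 + s * (e.2.1 - e.1.1), e.1.2 + s * (e.2.2 - e.1.2))
    = evalp f e.1.

Definition Sigma (r : nat) (K : elem) (s : poly2) : Prop :=
  match K with
  | Tri _ _ _ => inP r s
  | Rect _ _ _ _ => inQ r s
  end.

Definition Wsp (k : nat) (K : elem) (w : poly2) : Prop :=
  match K with
  | Tri a b c =>
      if (4 <= k)%N then inP k.-1 w
      else exists p c0, inP k.-1 p /\ w = p + c0 *: bubble_tri a b c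
  | Rect xl xr yd yu =>
      if (3 <= k)%N then inQ k.-1 w
      else exists p c0, inQ 1 p /\ w = p + c0 *: bubble_rect xl xr yd yu
  end.

Definition use_tilde (k r : nat) : bool :=
  (r == k.-1) || ((r == k) && (k <= 3)%N).

Definition Pop (Phi : poly2 -> poly2) (k r : nat) (w : poly2) : vec :=
  if use_tilde k r then mpoincare Phi w else poincare w.

Definition Vsp (Phi : poly2 -> poly2) (k r : nat) (K : elem) (v : vec) : Prop :=
  exists s w, Sigma r K s /\ Wsp k K w /\ v = vadd (grad s) (Pop Phi k r w).

Definition Phi_admissible (Phi : poly2 -> poly2) (k : nat) (K : elem) : Prop :=
  [/\ (forall (a : R) w1 w2, Wsp k K w1 -> Wsp k K w2 ->
         Phi (a *: w1 + w2) = a *: Phi w1 + Phi w2),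
      (forall w, Wsp k K w -> forall e, e \in edges K ->
         const_on_edge (tang_comp (mpoincare Phi w) e) e) &
      (forall (j : nat) w, Wsp k K w ->
         match K with
         | Tri _ _ _ => inP j w -> inP j.+1 (Phi w)
         | Rect _ _ _ _ => inQ j w -> inQ j.+1 (Phi w)
         end)].

End Defs.

(* Since V is by definition  grad Sigma + P W,  where P is the Poincare
   operator p or its modification p~ = p - grad Phi, everything follows from
   two facts of polynomial calculus:
   - curl (p w) = w for every polynomial w, hence also curl (p~ w) = w since
     curl . grad = 0; this uses the Euler operator E = sum_i x_i d/dx_i:
     curl (x^perp f) = (2 + E) f, and the Poincare integral divides the
     degree-d part of w by d + 2;
   - in characteristic zero a polynomial with zero gradient is constant,
     again because E multiplies each monomial by its degree.
   Then curl recovers w from  grad s + P w,  which gives directness of the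
   sum, exactness at V and surjectivity onto W; exactness at Sigma is the
   second fact. *)

From HB Require Import structures.
From mathcomp Require Import all_boot all_order all_algebra.
From mathcomp Require Import mpoly.
From mathcomp Require Import zify ring.
Set Implicit Arguments. Unset Strict Implicit. Unset Printing Implicit Defensive.
Import Order.TTheory GRing.Theory Num.Theory.
Local Open Scope ring_scope.

Section EulerOperator.
Variables (R : numDomainType) (n : nat).
Implicit Types (p : {mpoly R[n]}) (m : 'X_{1..n}).

Definition euler p : {mpoly R[n]} := \sum_i 'X_i * mderiv i p.

Lemma mderivXi (i : 'I_n) : mderiv i 'X_i = 1 :> {mpoly R[n]}.
Proof.
rewrite mderivX (_ : (U_(i) - U_(i) = 0)%MM); last first.
  by apply/mnmP => j; rewrite mnmBE mnm0E subnn.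
by rewrite mnm1E eqxx mpolyX0 scale1r.
Qed.

Lemma mulX_mderivX (i : 'I_n) m :
  'X_i * mderiv i 'X_[m] = (m i)%:R *: 'X_[m] :> {mpoly R[n]}.
Proof.
rewrite mderivX -scalerAr -mpolyXD.
case E: (m i) => [|d]; first by rewrite !scale0r.
congr (_ *: 'X_[_]); apply/mnmP => j; rewrite mnmDE mnmBE mnm1E.
by case: eqP => [<-|_]; lia.
Qed.

Lemma eulerZX (c : R) m : euler (c *: 'X_[m]) = (c * (mdeg m)%:R) *: 'X_[m].
Proof.
rewrite /euler (eq_bigr (fun i => c *: ((m i)%:R *: 'X_[m]))) => [|i _].
  by rewrite -scaler_sumr -scaler_suml -natr_sum -mdegE scalerA.
by rewrite mderivZ -scalerAr mulX_mderivX.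
Qed.

Lemma eulerD p q : euler (p + q) = euler p + euler q.
Proof. by rewrite /euler -big_split; apply: eq_bigr => i _; rewrite mderivD mulrDr. Qed.

Lemma euler_sum (T : Type) (s : seq T) (c : T -> R) (f : T -> 'X_{1..n}) :
  euler (\sum_(t <- s) c t *: 'X_[f t]) =
  \sum_(t <- s) (c t * (mdeg (f t))%:R) *: 'X_[f t].
Proof.
elim: s => [|t s IH]; last by rewrite !big_cons eulerD IH eulerZX.
by rewrite !big_nil /euler big1 // => i _; rewrite mderiv0 mulr0.
Qed.

(* In characteristic zero, a polynomial whose gradient vanishes is constant:
   euler p = 0 forces every non-constant coefficient of p to vanish. *)
Lemma mderiv_eq0_const p : (forall i, mderiv i p = 0) -> p = (p@_0)%:MP.
Proof.
move=> dp0.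
have : euler p = 0 by rewrite /euler big1 // => i _; rewrite dp0 mulr0.
rewrite {1}(mpolyE p) euler_sum => ep0.
apply/mpolyP => m; rewrite mcoeffC.
have [->|m_neq0] := eqVneq m 0%MM; first by rewrite mulr1.
rewrite mulr0; have [m_supp|m_nsupp] := boolP (m \in msupp p); last first.
  exact: memN_msupp_eq0.
move/(congr1 (mcoeff m)): ep0.
rewrite raddf_sum /= (bigD1_seq m) ?msupp_uniq //= mcoeffZ mcoeffX eqxx mulr1.
rewrite big1 ?addr0 ?mcoeff0 => [|m' /negPf m'_neq]; last first.
  by rewrite mcoeffZ mcoeffX m'_neq mulr0.
move/eqP; rewrite mulf_eq0 pnatr_eq0 mdeg_eq0 (negPf m_neq0) orbF.
by move/eqP.
Qed.

End EulerOperator.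

Section PlaneCalculus.
Variable R : rcfType.
Implicit Types (p s u : poly2 R) (v : vec R).

Lemma euler2 p : euler p = x1 R * mderiv i0 p + x2 R * mderiv i1 p.
Proof.
by rewrite /euler big_ord_recl big_ord1; congr (_ + 'X__ * mderiv _ p); apply: val_inj.
Qed.

Lemma curl_grad s : curl (grad s) = 0.
Proof. by rewrite /curl /grad /= mderiv_comm subrr. Qed.

(* curl (x^perp f) = (2 + E) f, and the Poincare integral divides the
   degree-d part by d + 2; hence curl is a left inverse of the Poincare
   operator. *)
Lemma curl_poincare u : curl (poincare u) = u.
Proof.
rewrite /curl /poincare /= mulNr mderivN opprK !mderivM /x1 /x2 !mderivXi !mul1r.
rewrite addrACA -/(x1 R) -/(x2 R) -euler2 /poincare_int euler_sum.
rewrite -!big_split /= [in RHS](mpolyE u); apply: eq_bigr => m _.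
rewrite -!scalerDl; congr (_ *: _).
have : (mdeg m + 2)%:R != 0 :> R by rewrite pnatr_eq0 addn2.
by rewrite natrD => nz; field.
Qed.

Lemma poincare0 : poincare (0 : poly2 R) = vzero R.
Proof. by rewrite /poincare /poincare_int -mpolyC0 msupp0 big_nil !mulr0. Qed.

Lemma curl_vadd v v' : curl (vadd v v') = curl v + curl v'.
Proof. by rewrite /curl /vadd /= !mderivD; ring. Qed.

Lemma curl_vsub v v' : curl (vsub v v') = curl v - curl v'.
Proof. by rewrite /curl /vsub /= !mderivB; ring. Qed.

End PlaneCalculus.

Section FiniteElementSpaces.
Variable R : rcfType.
Implicit Types (K : elem R) (Phi : poly2 R -> poly2 R) (s w : poly2 R).

Lemma grad_eq0 s : grad s = vzero R <-> exists c : R, s = c%:MP.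
Proof.
split=> [[d0s d1s]|[c ->]]; last by rewrite /grad !mderivC.
exists s@_0; apply: mderiv_eq0_const => i.
have : (i == i0) || (i == i1) by case: i => [[|[|]]].
by case/orP => /eqP ->.
Qed.

Lemma Sigma_const r K (c : R) : Sigma r K c%:MP.
Proof.
by case: K => * m; rewrite msuppC; case: eqP => // _; rewrite inE => /eqP ->;
  rewrite ?mdeg0 ?mnm0E.
Qed.

Lemma Wsp0 k K : Wsp k K 0.
Proof.
have inP0 j : inP j (0 : poly2 R) by move=> m; rewrite -mpolyC0 msupp0.
have inQ0 j : inQ j (0 : poly2 R) by move=> m; rewrite -mpolyC0 msupp0.
case: K => [a b c|xl xr yd yu] /=; case: ifP => _ //;
  by exists 0, 0; rewrite scale0r addr0.
Qed.

Lemma admissible_Phi0 Phi k K : Phi_admissible Phi k K -> Phi 0 = 0.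
Proof.
case=> Phi_lin _ _; have := Phi_lin 1 0 0 (Wsp0 k K) (Wsp0 k K).
by rewrite !scale1r addr0 => Phi0_twice; apply: (addrI (Phi 0)); rewrite addr0 -Phi0_twice.
Qed.

Lemma curl_Pop Phi k r w : curl (Pop Phi k r w) = w.
Proof.
rewrite /Pop; case: ifP => _; last exact: curl_poincare.
by rewrite /mpoincare curl_vsub curl_poincare curl_grad subr0.
Qed.

Lemma Pop0 Phi k r : Phi 0 = 0 -> Pop Phi k r 0 = vzero R.
Proof.
rewrite /Pop /mpoincare poincare0 => ->; case: ifP => _ //.
by rewrite /vsub /grad /vzero /= !mderiv0 subr0.
Qed.

Lemma curl_grad_Pop Phi k r s w : curl (vadd (grad s) (Pop Phi k r w)) = w.
Proof. by rewrite curl_vadd curl_grad add0r curl_Pop. Qed.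

Lemma vadd0r (v : vec R) : vadd (grad 0) v = v.
Proof. by case: v => a b; rewrite /vadd /grad /= !mderiv0 !add0r. Qed.

Lemma vaddr0 (v : vec R) : vadd v (vzero R) = v.
Proof. by case: v => a b; rewrite /vadd /vzero /= !addr0. Qed.

End FiniteElementSpaces.

Theorem mainTheorem3 (R : rcfType) (k r : nat) (K : elem R)
    (Phi : poly2 R -> poly2 R) :
  (2 <= k)%N ->
  [|| r == k.-1, r == k | r == k.+1] ->
  valid_elem K ->
  Phi_admissible Phi k K ->
  (* the sum grad Sigma + (p or p~) W is direct *)
  (forall s w, Sigma r K s -> Wsp k K w ->
     vadd (grad s) (Pop Phi k r w) = vzero R ->
     grad s = vzero R /\ Pop Phi k r w = vzero R) /\
  (* the maps are well defined: R -> Sigma, grad : Sigma -> V, curl : V -> W *)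
  (forall c : R, Sigma r K c%:MP) /\
  (forall s, Sigma r K s -> Vsp Phi k r K (grad s)) /\
  (forall v, Vsp Phi k r K v -> Wsp k K (curl v)) /\
  (* complex *)
  (forall s, Sigma r K s -> curl (grad s) = 0) /\
  (* exactness at Sigma *)
  (forall s, Sigma r K s -> (grad s = vzero R <-> exists c : R, s = c%:MP)) /\
  (* exactness at V *)
  (forall v, Vsp Phi k r K v ->
     (curl v = 0 <-> exists s, Sigma r K s /\ v = grad s)) /\
  (* exactness at W (surjectivity of curl) *)
  (forall w, Wsp k K w -> exists v, Vsp Phi k r K v /\ curl v = w).
Proof.
move=> _ _ _ /admissible_Phi0 Phi0; have Pop_0 := Pop0 k r Phi0.
have Sigma0 : Sigma r K 0 by rewrite -mpolyC0; apply: Sigma_const.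
split=> [s w _ _ sum0|].
  have w0 : w = 0 by rewrite -(curl_grad_Pop Phi k r s w) sum0 /curl /= !mderiv0 subr0.
  by move: sum0; rewrite w0 Pop_0 vaddr0.
split; first exact: Sigma_const.
split=> [s Ss|]; first by exists s, 0; rewrite Pop_0 vaddr0; split=> //; split=> //; apply: Wsp0.
split=> [v [s [w [_ [Ww ->]]]]|]; first by rewrite curl_grad_Pop.
split=> [s _|]; first exact: curl_grad.
split=> [s _|]; first exact: grad_eq0.
split=> [v [s [w [Ss [_ ->]]]]|w Ww].
  split=> [|[s' [_ v_grad]]]; last by rewrite v_grad curl_grad.
  by rewrite curl_grad_Pop => w0; exists s; rewrite w0 Pop_0 vaddr0.
by exists (Pop Phi k r w); rewrite curl_Pop; split=> //; exists 0, w; rewrite vadd0r.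
Qed.
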